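(* Consider the following binary classification model of feature learning. Let $p_d\in[0,1]$, $p_r = 1-p_d$, and let $t_d, t_r, n_d, n_r, c_d, c_r$ be nonnegative integers with $n_d \le t_d$, $n_r\le t_r$, $c_d\le t_d$, $c_r\le t_r$. Each class $y\in\{1,2\}$ has its own set $D_y$ of $t_d$ dominant features and its own set $R_y$ of $t_r$ rare features, all these sets being pairwise disjoint. A data point $(x,y)$ is generated as follows: $y$ is uniform on $\{1,2\}$; then with probability $p_d$ the point is dominant, and its feature set $\Pi(x)$ is a uniformly random $n_d$-element subset of $D_y$ (sampled without replacement); otherwise (probability $p_r$) it is rare, and $\Pi(x)$ is a uniformly random $n_r$-element subset of $R_y$. A model $f$ is drawn, independently of the data, by choosing for each class $y$ a uniformly random $c_d$-element subset of $D_y$ and a uniformly random $c_r$-element subset of $R_y$ (all choices independent); $\Pi(f)$ is the union of these subsets. On $(x,y)$, $f$ predicts $y$ if $\Pi(f)\cap\Pi(x)\neq\varnothing$, and otherwise outputs a uniformly random guess in $\{1,2\}$, so its expected error on $(x,y)$ is $\frac12\mathbf{1}\{\Pi(f)\cap\Pi(x)=\varnothing\}$. Then, with the convention $\binom{n}{r}=0$ when $n<r$, the expected accuracy over the model distribution and the data distribution is $$\mathsf{Acc} = p_d\left(1-\frac12\frac{\binom{t_d-c_d}{n_d}}{\binom{t_d}{n_d}}\right) + p_r\left(1-\frac12\frac{\binom{t_r-c_r}{n_r}}{\binom{t_r}{n_r}}\right).$$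
   Context: In the paper, $c$ denotes the total model capacity, with $c_d=\frac12 p_d c$ and $c_r = \frac12 p_r c$, both rounded to integers so that the total number of features of a model is $c$. These serve only to define $c_d,c_r$; the statement holds for any such integers. *)

(* finite uniform probability written as explicit averages. *)
From HB Require Import structures.
From mathcomp Require Import all_boot all_order all_algebra.
Set Implicit Arguments. Unset Strict Implicit. Unset Printing Implicit Defensive.
Import Order.TTheory GRing.Theory Num.Theory.
Local Open Scope ring_scope.

(* Features: a class label in 'I_2 (class 1 = ord0, class 2 = ord_max) and
   either a dominant index in 'I_td or a rare index in 'I_tr. *)
Definition feature (td tr : nat) := ('I_2 * ('I_td + 'I_tr))%type.

Definition domset (td tr : nat) (y : 'I_2) : {set feature td tr} :=
  [set (y, inl i) | i : 'I_td].
Definition rareset (td tr : nat) (y : 'I_2) : {set feature td tr} :=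
  [set (y, inr j) | j : 'I_tr].

Definition ksubsets (T : finType) (A : {set T}) (k : nat) : {set {set T}} :=
  [set S : {set T} | (S \subset A) && (#|S| == k)%N].

Definition avg (R : realFieldType) (T : finType) (A : {set T}) (F : T -> R) : R :=
  (#|A|%:R)^-1 * \sum_(a in A) F a.

Definition class1 : 'I_2 := ord0.
Definition class2 : 'I_2 := ord_max.

Definition acc_pt (R : realFieldType) (T : finType) (Pf Px : {set T}) : R :=
  1 - 2^-1 * (if Pf :&: Px == set0 then 1 else 0).

Definition model_exp (R : realFieldType) (td tr cd cr : nat)
  (G : {set feature td tr} -> R) : R :=
  avg (ksubsets (domset td tr class1) cd) (fun A1 =>
  avg (ksubsets (rareset td tr class1) cr) (fun B1 =>
  avg (ksubsets (domset td tr class2) cd) (fun A2 =>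
  avg (ksubsets (rareset td tr class2) cr) (fun B2 =>
    G (A1 :|: B1 :|: A2 :|: B2))))).

Definition data_exp (R : realFieldType) (td tr : nat) (pd : R) (nd nr : nat)
  (H : {set feature td tr} -> 'I_2 -> R) : R :=
  avg [set: 'I_2] (fun y =>
    pd * avg (ksubsets (domset td tr y) nd) (fun X => H X y)
    + (1 - pd) * avg (ksubsets (rareset td tr y) nr) (fun X => H X y)).

Definition Acc (R : realFieldType) (td tr : nat) (pd : R) (nd nr cd cr : nat) : R :=
  @model_exp R td tr cd cr (fun Pf => data_exp pd nd nr (fun Px (_ : 'I_2) => acc_pt R Pf Px)).

From HB Require Import structures.
From mathcomp Require Import all_boot all_order all_algebra.
From mathcomp Require Import ring.
Import Order.TTheory GRing.Theory Num.Theory.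
Local Open Scope ring_scope.

(* A model meets exactly [cd] features of each dominant set and [cr] of each
   rare set, so the error it makes on a dominant point of either class is the
   hypergeometric probability C(td - cd, nd) / C(td, nd) that a uniform
   nd-subset of D_y avoids them, and similarly on rare points. The accuracy
   is therefore the same for every model, and averaging over models changes
   nothing. *)

Lemma card_ksubsets (T : finType) (D : {set T}) (k : nat) :
  #|ksubsets D k| = 'C(#|D|, k).
Proof. exact: cards_draws. Qed.

Lemma card_ksubsets_gt0 (T : finType) (D : {set T}) (k : nat) :
  (k <= #|D|)%N -> (0 < #|ksubsets D k|)%N.
Proof. by rewrite card_ksubsets bin_gt0. Qed.

Lemma avg_cst (R : realFieldType) (T : finType) (A : {set T}) (F : T -> R) (c : R) :
  (0 < #|A|)%N -> {in A, forall a, F a = c} -> avg A F = c.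
Proof.
move=> A_gt0 Fc; rewrite /avg (eq_bigr (fun _ => c)) // sumr_const -[c *+ _]mulr_natr.
by rewrite mulrCA mulVf ?mulr1 // pnatr_eq0 -lt0n.
Qed.

Lemma card_ksubsets_disjoint (T : finType) (D P : {set T}) (k : nat) :
  #|[set X in ksubsets D k | P :&: X == set0]| = 'C(#|D| - #|P :&: D|, k).
Proof.
rewrite (setIC P D) -cardsD -card_ksubsets; apply: eq_card => X.
by rewrite !inE subsetD setI_eq0 disjoint_sym andbAC.
Qed.

Lemma avg_acc_pt_ksubsets (R : realFieldType) (T : finType) (D Pf : {set T}) (k : nat) :
  (k <= #|D|)%N ->
  avg (ksubsets D k) (acc_pt R Pf) =
  1 - 2^-1 * ('C(#|D| - #|Pf :&: D|, k)%:R / 'C(#|D|, k)%:R).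
Proof.
move=> kD; rewrite /avg /acc_pt sumrB -mulr_sumr sumr_const card_ksubsets.
rewrite -big_mkcondr -big_set sumr_const card_ksubsets_disjoint.
have C_neq0 : 'C(#|D|, k)%:R != 0 :> R by rewrite pnatr_eq0 -lt0n bin_gt0.
by field.
Qed.

Lemma setIUl_disjointr (T : finType) (A B D : {set T}) :
  [disjoint B & D] -> (A :|: B) :&: D = A :&: D.
Proof. by move=> BD; rewrite setIUl (disjoint_setI0 BD) setU0. Qed.

Lemma setIUl_disjointl (T : finType) (A B D : {set T}) :
  [disjoint A & D] -> (A :|: B) :&: D = B :&: D.
Proof. by move=> AD; rewrite setUC setIUl_disjointr. Qed.

Lemma disjointsU (T : finType) (A B C : {set T}) :
  [disjoint A :|: B & C] = [disjoint A & C] && [disjoint B & C].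
Proof. by rewrite -!setI_eq0 setIUl setU_eq0. Qed.

Lemma ord2_cases (y : 'I_2) : y = class1 \/ y = class2.
Proof. by case: y => -[|[|//]] y2; [left | right]; apply/val_inj. Qed.

Section Features.

Variables td tr : nat.

Lemma card_domset (y : 'I_2) : #|domset td tr y| = td.
Proof. by rewrite card_imset ?card_ord // => i j [->]. Qed.

Lemma card_rareset (y : 'I_2) : #|rareset td tr y| = tr.
Proof. by rewrite card_imset ?card_ord // => i j [->]. Qed.

Lemma disjoint_domset_rareset (y y' : 'I_2) :
  [disjoint domset td tr y & rareset td tr y'].
Proof.
rewrite -setI_eq0; apply/eqP/setP => x; rewrite !inE.
by apply/negbTE/andP => -[/imsetP[i _ ->] /imsetP[j _ []]].
Qed.

Lemma disjoint_rareset_domset (y y' : 'I_2) :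
  [disjoint rareset td tr y & domset td tr y'].
Proof. by rewrite disjoint_sym disjoint_domset_rareset. Qed.

Lemma disjoint_domset (y y' : 'I_2) :
  y != y' -> [disjoint domset td tr y & domset td tr y'].
Proof.
move=> /negbTE neq_yy'; rewrite -setI_eq0; apply/eqP/setP => x; rewrite !inE.
by apply/negbTE/andP => -[/imsetP[i _ ->] /imsetP[j _ [/eqP]]]; rewrite neq_yy'.
Qed.

Lemma disjoint_rareset (y y' : 'I_2) :
  y != y' -> [disjoint rareset td tr y & rareset td tr y'].
Proof.
move=> /negbTE neq_yy'; rewrite -setI_eq0; apply/eqP/setP => x; rewrite !inE.
by apply/negbTE/andP => -[/imsetP[i _ ->] /imsetP[j _ [/eqP]]]; rewrite neq_yy'.
Qed.

Variables A1 B1 A2 B2 : {set feature td tr}.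
Hypotheses (sA1 : A1 \subset domset td tr class1) (sB1 : B1 \subset rareset td tr class1).
Hypotheses (sA2 : A2 \subset domset td tr class2) (sB2 : B2 \subset rareset td tr class2).

Let Pf := A1 :|: B1 :|: A2 :|: B2.

Let disjoint_A1 (E : {set feature td tr}) :
  [disjoint domset td tr class1 & E] -> [disjoint A1 & E].
Proof. exact: disjointWl sA1. Qed.
Let disjoint_B1 (E : {set feature td tr}) :
  [disjoint rareset td tr class1 & E] -> [disjoint B1 & E].
Proof. exact: disjointWl sB1. Qed.
Let disjoint_A2 (E : {set feature td tr}) :
  [disjoint domset td tr class2 & E] -> [disjoint A2 & E].
Proof. exact: disjointWl sA2. Qed.
Let disjoint_B2 (E : {set feature td tr}) :
  [disjoint rareset td tr class2 & E] -> [disjoint B2 & E].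
Proof. exact: disjointWl sB2. Qed.

Lemma model_setI_domset1 : Pf :&: domset td tr class1 = A1.
Proof.
rewrite /Pf -setUA !setIUl_disjointr ?(setIidPl sA1) ?disjointsU //;
  by rewrite ?disjoint_B1 ?disjoint_A2 ?disjoint_B2 ?disjoint_domset ?disjoint_rareset_domset.
Qed.

Lemma model_setI_rareset1 : Pf :&: rareset td tr class1 = B1.
Proof.
rewrite /Pf -setUA setIUl_disjointr ?setIUl_disjointl ?(setIidPl sB1) ?disjointsU //;
  by rewrite ?disjoint_A1 ?disjoint_A2 ?disjoint_B2 ?disjoint_rareset ?disjoint_domset_rareset.
Qed.

Lemma model_setI_domset2 : Pf :&: domset td tr class2 = A2.
Proof.
rewrite /Pf -setUA setIUl_disjointl ?setIUl_disjointr ?(setIidPl sA2) ?disjointsU //;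
  by rewrite ?disjoint_B2 ?disjoint_A1 ?disjoint_B1 ?disjoint_domset ?disjoint_rareset_domset.
Qed.

Lemma model_setI_rareset2 : Pf :&: rareset td tr class2 = B2.
Proof.
rewrite /Pf -setUA setIUl_disjointl ?setIUl_disjointl ?(setIidPl sB2) ?disjointsU //;
  by rewrite ?disjoint_A2 ?disjoint_A1 ?disjoint_B1 ?disjoint_rareset ?disjoint_domset_rareset.
Qed.

End Features.

Lemma model_exp_cst (R : realFieldType) (td tr cd cr : nat)
    (G : {set feature td tr} -> R) (c : R) :
  (cd <= td)%N -> (cr <= tr)%N ->
  (forall A1 B1 A2 B2,
    A1 \in ksubsets (domset td tr class1) cd -> B1 \in ksubsets (rareset td tr class1) cr ->
    A2 \in ksubsets (domset td tr class2) cd -> B2 \in ksubsets (rareset td tr class2) cr ->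
    G (A1 :|: B1 :|: A2 :|: B2) = c) ->
  model_exp cd cr G = c.
Proof.
move=> cdt crt Gc; have dom_gt0 y : (0 < #|ksubsets (domset td tr y) cd|)%N.
  by rewrite card_ksubsets_gt0 ?card_domset.
have rare_gt0 y : (0 < #|ksubsets (rareset td tr y) cr|)%N.
  by rewrite card_ksubsets_gt0 ?card_rareset.
apply: avg_cst => // A1 A1s; apply: avg_cst => // B1 B1s.
by apply: avg_cst => // A2 A2s; apply: avg_cst => // B2 B2s; apply: Gc.
Qed.

Lemma data_exp_acc_pt (R : realFieldType) (td tr : nat) (pd : R) (nd nr cd cr : nat)
    (Pf : {set feature td tr}) :
  (nd <= td)%N -> (nr <= tr)%N ->
  (forall y, #|Pf :&: domset td tr y| = cd) -> (forall y, #|Pf :&: rareset td tr y| = cr) ->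
  data_exp pd nd nr (fun Px _ => acc_pt R Pf Px) =
    pd * (1 - 2^-1 * ('C(td - cd, nd)%:R / 'C(td, nd)%:R))
    + (1 - pd) * (1 - 2^-1 * ('C(tr - cr, nr)%:R / 'C(tr, nr)%:R)).
Proof.
move=> ndt nrt PfD PfR; apply: avg_cst => [|y _]; first by rewrite cardsT card_ord.
by rewrite !avg_acc_pt_ksubsets ?card_domset ?card_rareset ?PfD ?PfR.
Qed.

Theorem mainTheorem1 (R : realFieldType) (pd : R) (td tr nd nr cd cr : nat) :
  0 <= pd <= 1 ->
  (nd <= td)%N -> (nr <= tr)%N -> (cd <= td)%N -> (cr <= tr)%N ->
  Acc td tr pd nd nr cd cr =
    pd * (1 - 2^-1 * ('C(td - cd, nd)%:R / 'C(td, nd)%:R))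
    + (1 - pd) * (1 - 2^-1 * ('C(tr - cr, nr)%:R / 'C(tr, nr)%:R)).
Proof.
(* The identity is affine in [pd]. *)
move=> _ ndt nrt cdt crt; apply: model_exp_cst => // A1 B1 A2 B2.
rewrite !inE => /andP[sA1 /eqP cA1] /andP[sB1 /eqP cB1].
move=> /andP[sA2 /eqP cA2] /andP[sB2 /eqP cB2].
apply: data_exp_acc_pt => // y; case: (ord2_cases y) => ->;
  by rewrite ?model_setI_domset1 ?model_setI_rareset1 ?model_setI_domset2 ?model_setI_rareset2.
Qed.
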